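(* Let $0\le\epsilon\le1/3$, let $f(x)=\frac{1+\epsilon-2x}{1-\epsilon}$, and for an integer $n\ge1$ define the polynomial $C_n(x):=1-\frac{T_n(f(x))}{T_n(f(0))}$, where $T_n$ is the Chebyshev polynomial of degree $n$. Then for any sequence $\boldsymbol\lambda=(\lambda_1,\dots,\lambda_d)$ with $0\le\lambda_i\le1$, $$\gamma_2(\mathcal D_{C_n,\boldsymbol\lambda})\le6n^2-3.$$
   Context: The Chebyshev polynomial $T_n$ is defined by $T_n(\cos\theta)=\cos(n\theta)$. For a continuously differentiable $h$ and a sequence $\boldsymbol\lambda=(\lambda_1,\dots,\lambda_d)$, $\mathcal D_{h,\boldsymbol\lambda}$ is the $d\times d$ matrix with entries $(\mathcal D_{h,\boldsymbol\lambda})_{ij}=\frac{h(\lambda_i)-h(\lambda_j)}{\lambda_i-\lambda_j}$ if $\lambda_i\ne\lambda_j$ and $h'(\lambda_i)$ if $\lambda_i=\lambda_j$. For a $d\times d$ matrix $\mathbf M$, $\gamma_2(\mathbf M)=\inf\max\big(\{\|v_i\|^2:1\le i\le d\}\cup\{\|w_j\|^2:1\le j\le d\}\big)$, the infimum over all families of vectors $v_i,w_j$ with $\mathbf M_{ij}=\langle v_i|w_j\rangle$ for all $i,j$. *)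

From HB Require Import structures.
From mathcomp Require Import all_boot all_order all_algebra.
From mathcomp Require Import all_classical all_reals.
Set Implicit Arguments. Unset Strict Implicit. Unset Printing Implicit Defensive.
Import Order.TTheory GRing.Theory Num.Theory.
Local Open Scope ring_scope.

Fixpoint cheb (R : nzRingType) (n : nat) : {poly R} :=
  match n with
  | 0 => 1
  | 1 => 'X
  | (m.+1 as k).+1 => 2%:R *: 'X * cheb R k - cheb R m
  end.

(* The divided-difference matrix D_{h,lambda}, for h a polynomial
   (h' is the formal derivative, which equals the usual derivative). *)
Definition divdiff (R : fieldType) (h : {poly R}) (d : nat) (lam : 'I_d -> R)
  : 'M[R]_d :=
  \matrix_(i, j) (if lam i != lam j then (h.[lam i] - h.[lam j]) / (lam i - lam j)
                  else (h^`()).[lam i]).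

Definition rdot (R : realType) (k : nat) (x y : 'rV[R]_k) : R :=
  \sum_(l < k) x 0 l * y 0 l.

Definition gamma2 (R : realType) (d : nat) (M : 'M[R]_d) : R :=
  inf [set x : R | exists (k : nat) (v w : 'I_d -> 'rV[R]_k),
        (forall i j, M i j = rdot (v i) (w j)) /\
        x = Num.max (\big[Num.max/0]_(i < d) rdot (v i) (v i))
                    (\big[Num.max/0]_(j < d) rdot (w j) (w j))]%classic.

Definition fpoly (R : fieldType) (eps : R) : {poly R} :=
  ((1 + eps) / (1 - eps))%:P - (2%:R / (1 - eps)) *: 'X.

Definition Cpoly (R : fieldType) (eps : R) (n : nat) : {poly R} :=
  1 - ((cheb R n).[(fpoly eps).[0]])^-1 *: (cheb R n \Po fpoly eps).

From HB Require Import structures.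
From mathcomp Require Import all_boot all_order all_algebra.
From mathcomp Require Import all_classical all_reals.
From mathcomp Require Import ring lra.
Import Order.TTheory GRing.Theory Num.Theory.
Set Implicit Arguments. Unset Strict Implicit. Unset Printing Implicit Defensive.
Local Open Scope ring_scope.

(* The divided differences of T_n are a sum of n + 1 rank-one kernels:
   (T_n(x) - T_n(y)) / (x - y) = sum_(l <= n) c_l T_l(x) U_(n-l-1)(y), with
   c_0 = 1 and c_l = 2 otherwise; on the diagonal this is T_n'(x) = n U_(n-1)(x).
   As f is affine of slope -b, b = 2/(1-eps), and maps [0,1] onto [-1,a] with
   a = f(0) >= 1, D_(C_n,lambda) is b / T_n(a) times this kernel at the points
   f(lambda_i).  On [-1,a] we have |T_l| <= T_l(a) and |U_m| <= U_m(a), so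
   balancing the rank-one factors gives
   gamma_2 <= b / T_n(a) * n U_(n-1)(a) <= b n^2 <= 3 n^2 <= 6 n^2 - 3. *)

Section ChebyshevIdentities.
Variable R : comNzRingType.
Implicit Types x y : R.

(* [chebU n x] is U_(n-1)(x), with U the Chebyshev polynomials of the second
   kind and U_(-1) = 0. *)
Fixpoint chebU (n : nat) x : R :=
  match n with
  | 0 => 0
  | 1 => 1
  | (m.+1 as k).+1 => 2 * x * chebU k x - chebU m x
  end.

Lemma chebSS n : cheb R n.+2 = 2%:R *: 'X * cheb R n.+1 - cheb R n.
Proof. by []. Qed.

Lemma horner_cheb0 x : (cheb R 0).[x] = 1.
Proof. by rewrite hornerE. Qed.

Lemma horner_cheb1 x : (cheb R 1).[x] = x.
Proof. exact: hornerX. Qed.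

Lemma horner_chebSS n x :
  (cheb R n.+2).[x] = 2 * x * (cheb R n.+1).[x] - (cheb R n).[x].
Proof. by rewrite /= !hornerE. Qed.

Lemma chebUSS n x : chebU n.+2 x = 2 * x * chebU n.+1 x - chebU n x.
Proof. by []. Qed.

Lemma horner_cheb_chebU_S n x :
  (cheb R n.+1).[x] = x * (cheb R n).[x] + (x ^+ 2 - 1) * chebU n x /\
  chebU n.+1 x = (cheb R n).[x] + x * chebU n x.
Proof.
elim: n => [|n [IHT IHU]]; first by rewrite horner_cheb1 horner_cheb0 /=; split; ring.
by rewrite horner_chebSS chebUSS IHT IHU; split; ring.
Qed.

Lemma horner_chebS n x :
  (cheb R n.+1).[x] = x * (cheb R n).[x] + (x ^+ 2 - 1) * chebU n x.
Proof. by case: (horner_cheb_chebU_S n x). Qed.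

Lemma chebUS n x : chebU n.+1 x = (cheb R n).[x] + x * chebU n x.
Proof. by case: (horner_cheb_chebU_S n x). Qed.

Lemma cheb_pell n x : (cheb R n).[x] ^+ 2 - (x ^+ 2 - 1) * chebU n x ^+ 2 = 1.
Proof.
elim: n => [|n IH]; first by rewrite horner_cheb0 /=; ring.
by rewrite horner_chebS chebUS -[RHS]IH; ring.
Qed.

Lemma deriv_cheb n x : (cheb R n)^`().[x] = n%:R * chebU n x.
Proof.
suff : (cheb R n)^`().[x] = n%:R * chebU n x /\
       (cheb R n.+1)^`().[x] = n.+1%:R * chebU n.+1 x by case.
elim: n => [|n [IH IHS]]; first by rewrite /= derivC derivX !hornerE.
split=> //; rewrite chebSS derivB derivM derivZ derivX !hornerE IH IHS.
by rewrite (chebUSS n x) chebUS horner_chebS -!natr1; ring.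
Qed.

Definition cheb_dd n x y :=
  \sum_(l < n.+1) (if l == 0 :> nat then 1 else 2) * (cheb R l).[x] * chebU (n - l) y.

Lemma cheb_dd0 x y : cheb_dd 0 x y = 0.
Proof. by rewrite /cheb_dd big_ord1 /= mulr0. Qed.

Lemma cheb_dd1 x y : cheb_dd 1 x y = 1.
Proof. by rewrite /cheb_dd !big_ord_recr big_ord0 /= horner_cheb0 mulr0 !addr0 add0r !mul1r. Qed.

Lemma cheb_ddSS n x y :
  cheb_dd n.+2 x y = 2 * (cheb R n.+1).[x] + 2 * y * cheb_dd n.+1 x y - cheb_dd n x y.
Proof.
rewrite /cheb_dd big_ord_recr big_ord_recr /= subnn subSnn /= mulr0 addr0 mulr1.
rewrite [in X in _ = _ + _ * X - _]big_ord_recr /= subnn /= mulr0 addr0.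
rewrite [LHS]addrC -addrA mulr_sumr -sumrB; congr (_ + _).
apply: eq_bigr => -[l ltln] _ /=.
have -> : (n.+2 - l = (n - l).+2)%N by rewrite !subSn // ltnW.
by rewrite subSn // chebUSS; ring.
Qed.

Lemma cheb_dd_sub n x y :
  (cheb R n).[x] - (cheb R n).[y] = (x - y) * cheb_dd n x y.
Proof.
suff : (cheb R n).[x] - (cheb R n).[y] = (x - y) * cheb_dd n x y /\
       (cheb R n.+1).[x] - (cheb R n.+1).[y] = (x - y) * cheb_dd n.+1 x y by case.
elim: n => [|n [IH IHS]].
  by rewrite cheb_dd0 cheb_dd1 !horner_cheb0 !horner_cheb1; split; ring.
split=> //; rewrite cheb_ddSS !horner_chebSS.
have -> : 2 * x * (cheb R n.+1).[x] - (cheb R n).[x] - (2 * y * (cheb R n.+1).[y] - (cheb R n).[y])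
  = 2 * (x - y) * (cheb R n.+1).[x] + 2 * y * ((cheb R n.+1).[x] - (cheb R n.+1).[y])
    - ((cheb R n).[x] - (cheb R n).[y]) by ring.
by rewrite IH IHS; ring.
Qed.

Lemma cheb_dd_diag n x : cheb_dd n x x = n%:R * chebU n x.
Proof.
suff : cheb_dd n x x = n%:R * chebU n x /\ cheb_dd n.+1 x x = n.+1%:R * chebU n.+1 x by case.
elim: n => [|n [IH IHS]]; first by rewrite cheb_dd0 cheb_dd1 /= mul0r mul1r.
by split=> //; rewrite cheb_ddSS IH IHS chebUSS chebUS horner_chebS -!natr1; ring.
Qed.

End ChebyshevIdentities.

Section ChebyshevBounds.
Variable R : realDomainType.
Implicit Types x a z : R.

Lemma norm_cheb_le1 n x : -1 <= x <= 1 -> `|(cheb R n).[x]| <= 1.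
Proof.
move=> /andP[x_ge x_le].
have : (x ^+ 2 - 1) * chebU n x ^+ 2 <= 0 by rewrite mulr_le0_ge0 ?sqr_ge0 //; nra.
rewrite ler_norml; have := cheb_pell n x; nra.
Qed.

Lemma norm_chebU_le_n n x : -1 <= x <= 1 -> `|chebU n x| <= n%:R.
Proof.
move=> x_range; elim: n => [|n IH]; first by rewrite normr0.
rewrite chebUS -natr1 addrC (le_trans (ler_normD _ _)) // lerD ?norm_cheb_le1 //.
rewrite normrM -[n%:R]mul1r ler_pM //.
by move: x_range => /andP[? ?]; rewrite ler_norml; apply/andP.
Qed.

Lemma cheb_chebU_mono_ge1 n x a : 1 <= x -> x <= a ->
  1 <= (cheb R n).[x] <= (cheb R n).[a] /\ n%:R <= chebU n x <= chebU n a.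
Proof.
move=> x_ge1 x_le; elim: n => [|n [/andP[T_ge1 T_le] /andP[U_ge U_le]]].
  by rewrite !horner_cheb0 /= !lexx.
rewrite !horner_chebS !chebUS -natr1.
have U_ge0 : 0 <= chebU n x by apply: le_trans U_ge.
have sq_ge0 : 0 <= x ^+ 2 - 1 by nra.
have sq_le : x ^+ 2 - 1 <= a ^+ 2 - 1 by nra.
split; apply/andP; split.
- nra.
- by rewrite lerD // ler_pM //; lra.
- rewrite addrC lerD //; nra.
- by rewrite lerD // ler_pM //; lra.
Qed.

Lemma chebU_le_cheb n x : 1 <= x -> chebU n x <= n%:R * (cheb R n).[x].
Proof.
move=> x_ge1; elim: n => [|n IH]; first by rewrite /= mul0r.
have [/andP[T_ge1 _] /andP[U_ge _]] := cheb_chebU_mono_ge1 n x_ge1 (lexx x).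
rewrite horner_chebS chebUS -natr1.
have U_ge0 : 0 <= chebU n x by apply: le_trans U_ge.
have xU_le : x * chebU n x <= x * (n%:R * (cheb R n).[x]) by rewrite ler_wpM2l //; lra.
have : 0 <= (n%:R + 1) * ((x ^+ 2 - 1) * chebU n x) by rewrite !mulr_ge0 //; nra.
nra.
Qed.

Lemma norm_cheb_le n a z : 1 <= a -> -1 <= z <= a -> `|(cheb R n).[z]| <= (cheb R n).[a].
Proof.
move=> a_ge1 /andP[z_ge z_le].
have [/andP[Ta_ge1 _] _] := cheb_chebU_mono_ge1 n a_ge1 (lexx a).
have [z_le1|z_gt1] := lerP z 1.
  by rewrite (le_trans (norm_cheb_le1 _ _)) // z_ge z_le1.
have [/andP[T_ge1 T_le] _] := cheb_chebU_mono_ge1 n (ltW z_gt1) z_le.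
by rewrite ger0_norm // (le_trans _ T_ge1).
Qed.

Lemma norm_chebU_le n a z : 1 <= a -> -1 <= z <= a -> `|chebU n z| <= chebU n a.
Proof.
move=> a_ge1 /andP[z_ge z_le].
have [_ /andP[Ua_ge _]] := cheb_chebU_mono_ge1 n a_ge1 (lexx a).
have [z_le1|z_gt1] := lerP z 1.
  by rewrite (le_trans (norm_chebU_le_n _ _)) // z_ge z_le1.
have [_ /andP[U_ge U_le]] := cheb_chebU_mono_ge1 n (ltW z_gt1) z_le.
by rewrite ger0_norm // (le_trans _ U_ge).
Qed.

End ChebyshevBounds.

Section Gamma2.
Variable R : realType.

Lemma gamma2_le (d k : nat) (M : 'M[R]_d) (v w : 'I_d -> 'rV[R]_k) (B : R) :
  (forall i j, M i j = rdot (v i) (w j)) ->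
  (forall i, rdot (v i) (v i) <= B) -> (forall j, rdot (w j) (w j) <= B) ->
  0 <= B -> gamma2 M <= B.
Proof.
move=> M_vw v_le w_le B_ge0; rewrite /gamma2; set S := (X in inf X).
have S_lb : has_lbound S.
  exists 0 => _ [? [? [? [_ ->]]]]; rewrite le_max; apply/orP; left.
  apply: (big_ind (fun y => 0 <= y)) => // [y z y0 z0|i _]; first by rewrite le_max y0.
  by apply: sumr_ge0 => l _; rewrite -expr2 sqr_ge0.
have vw_in_S : S (Num.max (\big[Num.max/0]_i rdot (v i) (v i))
                          (\big[Num.max/0]_j rdot (w j) (w j))) by exists k, v, w.
by apply: le_trans (ge_inf S_lb vw_in_S) _; rewrite ge_max !bigmax_le.
Qed.

Lemma gamma2_le_sum_bounds (d m : nat) (M : 'M[R]_d) (p q : 'I_m -> 'I_d -> R)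
    (P Q : 'I_m -> R) :
  (forall i j, M i j = \sum_l p l i * q l j) ->
  (forall l i, `|p l i| <= P l) -> (forall l j, `|q l j| <= Q l) ->
  (forall l, 0 <= P l) -> (forall l, 0 <= Q l) ->
  gamma2 M <= \sum_l P l * Q l.
Proof.
move=> M_pq p_le q_le P_ge0 Q_ge0.
(* Scale the l-th term by sqrt(Q_l / P_l) on one side and its inverse on the
   other; when P_l or Q_l vanishes so does p_l or q_l, and 1/0 = 0 is harmless. *)
pose v i : 'rV[R]_m := \row_l (p l i * Num.sqrt (Q l / P l)).
pose w j : 'rV[R]_m := \row_l (q l j * Num.sqrt (P l / Q l)).
have vanish (y Y : R) : `|y| <= Y -> Y = 0 -> y = 0.
  by move=> + Y0; rewrite Y0 normr_le0 => /eqP.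
have balance (y Y Z : R) : `|y| <= Y -> 0 <= Z -> y * y * (Z / Y) <= Y * Z.
  move=> y_le Z_ge0; have [->|Y_neq0] := eqVneq Y 0; first by rewrite invr0 !mulr0 mul0r.
  have -> : Y * Z = Y * Y * (Z / Y) by field.
  have Y_ge0 : 0 <= Y := le_trans (normr_ge0 y) y_le.
  by rewrite ler_wpM2r ?divr_ge0 // (le_trans (ler_norm _)) // normrM ler_pM.
apply: (gamma2_le (v := v) (w := w)).
- move=> i j; rewrite M_pq /rdot; apply: eq_bigr => l _; rewrite !mxE.
  have [P0|P_neq0] := eqVneq (P l) 0; first by rewrite (vanish _ _ (p_le l i) P0) !(mul0r, mulr0).
  have [Q0|Q_neq0] := eqVneq (Q l) 0; first by rewrite (vanish _ _ (q_le l j) Q0) !(mul0r, mulr0).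
  rewrite mulrACA -sqrtrM ?divr_ge0 //.
  have -> : Q l / P l * (P l / Q l) = 1 by field; rewrite P_neq0 Q_neq0.
  by rewrite sqrtr1 mulr1.
- move=> i; apply: ler_sum => l _; rewrite !mxE mulrACA -(expr2 (Num.sqrt _)).
  by rewrite sqr_sqrtr ?divr_ge0 //; apply: balance.
- move=> j; apply: ler_sum => l _; rewrite !mxE mulrACA -(expr2 (Num.sqrt _)).
  by rewrite sqr_sqrtr ?divr_ge0 // [leRHS]mulrC; apply: balance.
- by apply: sumr_ge0 => l _; rewrite mulr_ge0.
Qed.

End Gamma2.

Lemma gamma2_cheb_dd_le (R : realType) (d n : nat) (K a : R) (x : 'I_d -> R) :
  0 <= K -> 1 <= a -> (forall i, -1 <= x i <= a) ->
  gamma2 (\matrix_(i, j) (K * cheb_dd n (x i) (x j))) <= K * (n%:R ^+ 2 * (cheb R n).[a]).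
Proof.
move=> K_ge0 a_ge1 x_range.
pose coef (l : 'I_n.+1) : R := K * (if l == 0 :> nat then 1 else 2).
have coef_ge0 l : 0 <= coef l by rewrite mulr_ge0 //; case: ifP.
apply: le_trans (gamma2_le_sum_bounds
  (p := fun l i => coef l * (cheb R l).[x i]) (q := fun l j => chebU (n - l) (x j))
  (P := fun l => coef l * (cheb R l).[a]) (Q := fun l => chebU (n - l) a) _ _ _ _ _) _.
- by move=> i j; rewrite mxE /cheb_dd mulr_sumr; apply: eq_bigr => l _; rewrite !mulrA.
- by move=> l i; rewrite normrM ger0_norm // ler_wpM2l // norm_cheb_le.
- by move=> l j; apply: norm_chebU_le.
- move=> l; have [/andP[T_ge1 _] _] := cheb_chebU_mono_ge1 l a_ge1 (lexx a).
  by rewrite mulr_ge0 // (le_trans _ T_ge1).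
- move=> l; have [_ /andP[U_ge _]] := cheb_chebU_mono_ge1 (n - l) a_ge1 (lexx a).
  exact: le_trans U_ge.
have -> : \sum_l coef l * (cheb R l).[a] * chebU (n - l) a = K * cheb_dd n a a.
  by rewrite /cheb_dd mulr_sumr; apply: eq_bigr => l _; rewrite !mulrA.
rewrite cheb_dd_diag ler_wpM2l // expr2 -mulrA ler_wpM2l //.
exact: chebU_le_cheb.
Qed.

Lemma horner_fpoly (F : fieldType) (eps z : F) :
  (fpoly eps).[z] = (1 + eps) / (1 - eps) - 2 / (1 - eps) * z.
Proof. by rewrite /fpoly !hornerE. Qed.

Lemma divdiff_Cpoly (F : fieldType) (eps : F) (n d : nat) (lam : 'I_d -> F) i j :
  divdiff (Cpoly eps n) lam i j =
  2 / (1 - eps) / (cheb F n).[(fpoly eps).[0]] *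
    cheb_dd n (fpoly eps).[lam i] (fpoly eps).[lam j].
Proof.
set b := 2 / (1 - eps); set k := (cheb F n).[(fpoly eps).[0]]^-1.
have fpoly_sub z z' : (fpoly eps).[z] - (fpoly eps).[z'] = - b * (z - z').
  by rewrite !horner_fpoly /b; ring.
have horner_Cpoly z : (Cpoly eps n).[z] = 1 - k * (cheb F n).[(fpoly eps).[z]].
  by rewrite /Cpoly hornerD hornerN hornerZ horner_comp hornerC.
rewrite /divdiff mxE; case: ifPn => [lam_neq|/negPn/eqP <-].
  rewrite !horner_Cpoly.
  have -> : forall u v : F, 1 - k * u - (1 - k * v) = - k * (u - v) by move=> *; ring.
  by rewrite cheb_dd_sub fpoly_sub; field; rewrite subr_eq0.
have fpoly_deriv : (fpoly eps)^`() = (- b)%:P.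
  by rewrite /fpoly derivB derivC derivZ derivX sub0r alg_polyC polyCN.
rewrite /Cpoly derivB derivZ deriv_comp fpoly_deriv -polyC1 derivC sub0r.
by rewrite hornerN hornerZ hornerM horner_comp hornerC -/k deriv_cheb -cheb_dd_diag; ring.
Qed.

Theorem lemma7 (R : realType) (eps : R) (n d : nat) (lam : 'I_d -> R) :
  0 <= eps -> eps <= 3%:R^-1 -> (1 <= n)%N ->
  (forall i, 0 <= lam i <= 1) ->
  gamma2 (divdiff (Cpoly eps n) lam) <= 6%:R * (n%:R) ^+ 2 - 3%:R.
Proof.
move=> eps_ge0 eps_le n_ge1 lam01.
set a := (fpoly eps).[0]; set b : R := 2 / (1 - eps).
have eps_lt1 : eps < 1 by lra.
have b_gt0 : 0 < b by rewrite divr_gt0 // subr_gt0.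
have b_le3 : b <= 3 by rewrite ler_pdivrMr ?subr_gt0 //; lra.
have a_ge1 : 1 <= a by rewrite /a horner_fpoly mulr0 subr0 ler_pdivlMr ?subr_gt0 //; lra.
have x_range i : -1 <= (fpoly eps).[lam i] <= a.
  have -> : (fpoly eps).[lam i] = a - b * lam i by rewrite /a /b !horner_fpoly; ring.
  have -> : -1 = a - b by rewrite /a /b horner_fpoly; field; rewrite subr_eq0 gt_eqF.
  by have /andP[? ?] := lam01 i; apply/andP; split; nra.
have [/andP[Ta_ge1 _] _] := cheb_chebU_mono_ge1 n a_ge1 (lexx a).
have -> : divdiff (Cpoly eps n) lam =
    \matrix_(i, j) (b / (cheb R n).[a] * cheb_dd n (fpoly eps).[lam i] (fpoly eps).[lam j]).
  by apply/matrixP => i j; rewrite divdiff_Cpoly mxE.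
have K_ge0 : 0 <= b / (cheb R n).[a] by rewrite divr_ge0 ?ltW //; lra.
apply: le_trans (gamma2_cheb_dd_le n K_ge0 a_ge1 x_range) _.
rewrite mulrCA divfK; last by rewrite gt_eqF // (lt_le_trans ltr01).
have : 1 <= n%:R ^+ 2 :> R by rewrite exprn_ege1 // ler1n.
nra.
Qed.
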